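(* For every integer $n\ge 0$, $$\Phi^{(2)}[a; b, b'; cq^{-n}, c'; x, y] = \frac{1}{(q/c; q)_n} \sum_{k=0}^n \begin{bmatrix} n \\ k \end{bmatrix} (-c)^{k-n} q^{\binom{n+1-k}{2}} \Phi^{(2)}[a; b, b'; c, c'; xq^k, y]$$ and $$\Phi^{(2)}[a; b, b'; cq^n, c'; x, y] = \sum_{k=0}^n \begin{bmatrix} n \\ k \end{bmatrix} c^k q^{2\binom{k}{2}} (cq^k; q)_{n-k}\, \Phi^{(2)}[a; b, b'; cq^k, c'; xq^k, y].$$
   Context: Let $q$ be a complex number with $0<|q|<1$. For complex $z$ and integer $m\ge 0$, $(z;q)_m=\prod_{j=0}^{m-1}(1-zq^j)$, with $(z;q)_0=1$. For integers $0\le k\le n$, $\begin{bmatrix} n \\ k \end{bmatrix}=\frac{(q;q)_n}{(q;q)_k(q;q)_{n-k}}$ is the $q$-binomial coefficient, and $\binom{j}{2}=j(j-1)/2$. The $q$-Appell function $\Phi^{(2)}$ is $$\Phi^{(2)}[a; b, b'; c, c'; x, y] = \sum_{m, n \geq 0} \frac{(a; q)_{m+n} (b; q)_m (b'; q)_n}{(q; q)_m (q; q)_n (c; q)_m (c'; q)_n} x^m y^n.$$ Identities are understood as identities of power series in $x,y$ (formal, or convergent for small $|x|,|y|$), with complex parameters chosen so that no denominator occurring vanishes. *)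

From HB Require Import structures.
From mathcomp Require Import all_boot all_order all_algebra.
From mathcomp Require Import complex.
From mathcomp Require Import Rstruct.
From Stdlib Require Rdefinitions.
Set Implicit Arguments. Unset Strict Implicit. Unset Printing Implicit Defensive.
Import Order.TTheory GRing.Theory Num.Theory.
Local Open Scope ring_scope.

Notation Cplx := (Rdefinitions.R[i]).

Definition qpoch (z q : Cplx) (m : nat) : Cplx := \prod_(j < m) (1 - z * q ^+ j).

Definition qbinom (q : Cplx) (n k : nat) : Cplx :=
  qpoch q q n / (qpoch q q k * qpoch q q (n - k)).

(* A formal power series in x, y over C, represented by its coefficient
   function: F m n is the coefficient of x^m y^n. *)
Definition fps2 := nat -> nat -> Cplx.

Definition Phi2 (q a b b' c c' : Cplx) : fps2 := fun m n =>
  qpoch a q (m + n) * qpoch b q m * qpoch b' q n /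
  (qpoch q q m * qpoch q q n * qpoch c q m * qpoch c' q n).

(* Substitution x |-> x t : the series F(x t, y). *)
Definition subst_x (F : fps2) (t : Cplx) : fps2 := fun m n => F m n * t ^+ m.

From HB Require Import structures.
From mathcomp Require Import all_boot all_order all_algebra.
From mathcomp Require Import complex.
From mathcomp Require Import Rstruct.
From Stdlib Require Rdefinitions.
From mathcomp Require Import ring zify.
From Stdlib Require Import FunctionalExtensionality.
Import Order.TTheory GRing.Theory Num.Theory.
Local Open Scope ring_scope.

(* Coefficientwise, Phi2 depends on c only through the factor 1 / (c; q)_m
   (Phi2_factor_c), so both identities are identities between such factors.

   Lowering c to c q^-n is the q-binomial theorem
   (x; q)_n = sum_k [n k] (-x)^k q^C(k,2) at x = c q^(m-n), combined with
   (c q^-n; q)_m (c q^(m-n); q)_n = (c q^-n; q)_n (c; q)_m and the reflection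
   (q/c; q)_n = (-c)^-n q^C(n+1,2) (c q^-n; q)_n.

   Raising c to c q^n is, via (c q^k; q)_m (c q^(k+m); q)_(n-k)
   = (c q^k; q)_(n-k) (c q^n; q)_m, the identity
   sum_k [n k] z^k q^(2 C(k,2)) (z q^k; q)_(n-k) = 1 at z = c q^m, a q-analogue
   of sum_k C(n,k) z^k (1 - z)^(n-k) = 1. *)

Lemma qpochS z q m : qpoch z q m.+1 = qpoch z q m * (1 - z * q ^+ m).
Proof. by rewrite /qpoch big_ord_recr. Qed.

Lemma qpochSl z q m : qpoch z q m.+1 = (1 - z) * qpoch (z * q) q m.
Proof.
rewrite /qpoch big_ord_recl /= expr0 mulr1; congr (_ * _).
by apply: eq_bigr => j _; rewrite /bump /= add1n exprS mulrA.
Qed.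

Lemma qpochD z q m n : qpoch z q (m + n) = qpoch z q m * qpoch (z * q ^+ m) q n.
Proof.
rewrite /qpoch big_split_ord; congr (_ * _).
by apply: eq_bigr => j _; rewrite exprD mulrA.
Qed.

Lemma qpochDC z q m n :
  qpoch z q m * qpoch (z * q ^+ m) q n = qpoch z q n * qpoch (z * q ^+ n) q m.
Proof. by rewrite -!qpochD addnC. Qed.

Lemma qpoch_neq0 z q m : `|z| < 1 -> `|q| <= 1 -> qpoch z q m != 0.
Proof.
move=> z_lt1 q_le1; apply/prodf_neq0 => j _; rewrite subr_eq0.
have : `|z * q ^+ j| < 1.
  by rewrite normrM normrX (le_lt_trans _ z_lt1) // ler_piMr // exprn_ile1.
by apply: contraTneq => <-; rewrite normr1 ltxx.
Qed.

Lemma Phi2_factor_c q a b b' c c' m p :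
  Phi2 q a b b' c c' m p = Phi2 q a b b' 0 c' m p / qpoch c q m.
Proof.
have qpoch0 : qpoch 0 q m = 1 by rewrite /qpoch big1 // => j _; rewrite mul0r subr0.
by rewrite /Phi2 qpoch0 mulr1 !invfM; ring.
Qed.

Lemma bin2_shift n k : (k <= n)%N ->
  ('C(n.+1, 2) + 'C(k, 2) = k * n + 'C(n.+1 - k, 2))%N.
Proof.
elim: k => [|k IHk] lt_kn; first by rewrite subn0 addn0.
have le_kn := ltnW lt_kn.
by rewrite (binS k 1) bin1 addnA IHk // subSS (subSn le_kn) (binS _ 1) bin1; lia.
Qed.

Section QBinomial.

Variable q : Cplx.
Hypothesis q_lt1 : `|q| < 1.

Lemma qpochqq_neq0 m : qpoch q q m != 0.
Proof. exact: qpoch_neq0 q_lt1 (ltW q_lt1). Qed.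

Lemma qbinom0 n : qbinom q n 0 = 1.
Proof. by rewrite /qbinom subn0 {2}/qpoch big_ord0 mul1r divff ?qpochqq_neq0. Qed.

Lemma qbinomn n : qbinom q n n = 1.
Proof. by rewrite /qbinom subnn {3}/qpoch big_ord0 mulr1 divff ?qpochqq_neq0. Qed.

Lemma qbinomS n k : (k < n)%N ->
  qbinom q n.+1 k.+1 = qbinom q n k.+1 + q ^+ (n - k) * qbinom q n k.
Proof.
move=> lt_kn; have [l ->] : exists l, n = (k.+1 + l)%N.
  by exists (n - k.+1)%N; rewrite subnKC.
rewrite /qbinom subSS addKn.
have -> : (k.+1 + l - k = l.+1)%N by lia.
have := qpochqq_neq0 k.+1; have := qpochqq_neq0 l.+1.
rewrite (qpochS q q (k.+1 + l)) !(qpochS q q k) !(qpochS q q l).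
rewrite !mulf_eq0 !negb_or => /andP[nz_l nz_l1] /andP[nz_k nz_k1].
rewrite exprD !exprS; field.
by rewrite nz_k nz_k1 nz_l nz_l1.
Qed.

(* [qbinom q n k] is not 0 for k > n, so the boundary terms are split off by hand. *)
Lemma sum_qbinomS (F : nat -> Cplx) n :
  \sum_(k < n.+2) qbinom q n.+1 k * F k =
  \sum_(k < n.+1) qbinom q n k * (F k + q ^+ (n - k) * F k.+1).
Proof.
rewrite big_ord_recl big_ord_recr /= qbinom0 qbinomn.
under [RHS]eq_bigr do rewrite mulrDr mulrCA.
rewrite big_split /= big_ord_recl [X in _ = _ + X]big_ord_recr /=.
rewrite qbinom0 qbinomn subnn expr0 /bump /= !add1n !mul1r -!addrA.
congr (_ + _); rewrite addrA -big_split /=; congr (_ + _).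
by apply: eq_bigr => i _; rewrite qbinomS // mulrDl mulrA.
Qed.

Lemma qpoch_qbinomial x n :
  qpoch x q n = \sum_(k < n.+1) qbinom q n k * (- x) ^+ k * q ^+ 'C(k, 2).
Proof.
elim: n => [|n IHn]; first by rewrite big_ord1 qbinom0 /qpoch big_ord0 !mulr1.
under eq_bigr do rewrite -mulrA.
rewrite (sum_qbinomS (fun k => (- x) ^+ k * q ^+ 'C(k, 2))) qpochS IHn mulr_suml.
apply: eq_bigr => -[k /=]; rewrite ltnS => le_kn _.
have qn : q ^+ n = q ^+ (n - k) * q ^+ k by rewrite -exprD subnK.
by rewrite (binS k 1) bin1 exprD exprS qn; ring.
Qed.

Lemma sum_qbinom_qpoch z n :
  \sum_(k < n.+1) qbinom q n k * z ^+ k * q ^+ (2 * 'C(k, 2)) *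
    qpoch (z * q ^+ k) q (n - k) = 1.
Proof.
elim: n z => [|n IHn] z; first by rewrite big_ord1 qbinom0 /qpoch big_ord0 !mulr1.
under eq_bigr do rewrite -2!mulrA.
rewrite (sum_qbinomS
  (fun k => z ^+ k * (q ^+ (2 * 'C(k, 2)) * qpoch (z * q ^+ k) q (n.+1 - k)))).
(* S_(n+1)(z) = (1 - z q^n) S_n(z) + z q^n S_n(z q) *)
transitivity ((1 - z * q ^+ n) * 1 + z * q ^+ n * 1); last by ring.
rewrite -[X in _ = _ * X + _](IHn z) -[X in _ = _ + _ * X](IHn (z * q)).
rewrite !mulr_sumr -big_split /=; apply: eq_bigr => -[k /=]; rewrite ltnS => le_kn _.
have qn : q ^+ n = q ^+ (n - k) * q ^+ k by rewrite -exprD subnK.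
have -> : z * q * q ^+ k = z * q ^+ k.+1 by rewrite exprS mulrA.
rewrite subSS (subSn le_kn) qpochS (binS k 1) bin1 mulnDr exprD (mul2n k) -addnn.
by rewrite exprD exprMn exprS qn; ring.
Qed.

Hypothesis q_neq0 : q != 0.

Lemma qpoch_reflect c n : c != 0 ->
  qpoch (q / c) q n = (- c) ^- n * q ^+ 'C(n.+1, 2) * qpoch (c * q ^- n) q n.
Proof.
move=> c0; elim: n => [|n IHn]; first by rewrite /qpoch !big_ord0 expr0 invr1 !mul1r.
rewrite qpochS IHn qpochSl.
have -> : c * q ^- n.+1 * q = c * q ^- n by rewrite exprS; field; rewrite q_neq0 expf_neq0.
rewrite (binS n.+1 1) bin1 exprD !exprS.
by field; rewrite !(expf_neq0, oppr_eq0, q_neq0, c0).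
Qed.

Lemma sum_lower_coef c n m : c != 0 ->
  \sum_(k < n.+1) qbinom q n k * (- c) ^- (n - k) * q ^+ 'C(n.+1 - k, 2) *
    (q ^+ k) ^+ m =
  (- c) ^- n * q ^+ 'C(n.+1, 2) * qpoch (c * q ^- n * q ^+ m) q n.
Proof.
move=> c0; rewrite qpoch_qbinomial mulr_sumr.
apply: eq_bigr => -[k /=]; rewrite ltnS => le_kn _.
have -> : q ^+ 'C(n.+1 - k, 2) = q ^+ 'C(n.+1, 2) * q ^+ 'C(k, 2) / (q ^+ n) ^+ k.
  rewrite -!exprD bin2_shift // -exprM (mulnC n k) exprD.
  by rewrite [X in X / _]mulrC mulfK ?expf_neq0.
rewrite (exprB le_kn) ?unitfE ?oppr_eq0 // -!mulNr !exprMn exprVn [q ^+ m ^+ k]exprAC.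
by field; rewrite !(expf_neq0, oppr_eq0, q_neq0, c0).
Qed.

Lemma sum_lower_coef_ratio c n m : c != 0 -> qpoch (c * q ^- n) q m != 0 ->
  \sum_(k < n.+1) qbinom q n k * (- c) ^- (n - k) * q ^+ 'C(n.+1 - k, 2) *
    (q ^+ k) ^+ m =
  qpoch (q / c) q n * qpoch c q m / qpoch (c * q ^- n) q m.
Proof.
move=> c0 nz_lower; rewrite sum_lower_coef // qpoch_reflect //.
have := qpochDC (c * q ^- n) q m n; rewrite divfK ?expf_neq0 // => swap.
by apply: (mulIf nz_lower); rewrite divfK // -[X in _ = X]mulrA -swap; ring.
Qed.

Lemma inv_qpoch_raise c n m :
  (forall k, (k <= n)%N -> qpoch (c * q ^+ k) q m != 0) ->
  (qpoch (c * q ^+ n) q m)^-1 =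
  \sum_(k < n.+1) qbinom q n k * c ^+ k * q ^+ (2 * 'C(k, 2)) *
    qpoch (c * q ^+ k) q (n - k) * ((q ^+ k) ^+ m / qpoch (c * q ^+ k) q m).
Proof.
move=> nz; rewrite -[LHS]mul1r -(sum_qbinom_qpoch (c * q ^+ m) n) mulr_suml.
apply: eq_bigr => -[k /=]; rewrite ltnS => le_kn _.
have nz_k := nz k le_kn; have nz_n := nz n (leqnn n).
have swap := qpochDC (c * q ^+ k) q m (n - k).
have cqn : c * q ^+ k * q ^+ (n - k) = c * q ^+ n by rewrite -mulrA -exprD subnKC.
rewrite cqn in swap; rewrite [c * q ^+ m * _]mulrAC.
have -> : qpoch (c * q ^+ k * q ^+ m) q (n - k) =
    qpoch (c * q ^+ k) q (n - k) * qpoch (c * q ^+ n) q m / qpoch (c * q ^+ k) q m.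
  by rewrite -swap [RHS]mulrC mulKf.
rewrite exprMn [q ^+ m ^+ k]exprAC.
by field; rewrite nz_k nz_n.
Qed.

End QBinomial.

Theorem theorem10 (q a b b' c c' : Cplx) (n : nat) :
  0 < `|q| < 1 ->
  (* first identity; hypotheses: no denominator vanishes *)
  ((c != 0 ->
    (forall m, qpoch (c * q ^- n) q m != 0) ->
    (forall m, qpoch c q m != 0) ->
    (forall m, qpoch c' q m != 0) ->
    qpoch (q / c) q n != 0 ->
    Phi2 q a b b' (c * q ^- n) c' =
    (fun m p => (qpoch (q / c) q n)^-1 *
       \sum_(k < n.+1) qbinom q n k * (- c) ^- (n - k) * q ^+ 'C(n.+1 - k, 2) *
         subst_x (Phi2 q a b b' c c') (q ^+ k) m p))
  /\
  (* second identity; hypotheses: no denominator vanishes *)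
   ((forall k m, (k <= n)%N -> qpoch (c * q ^+ k) q m != 0) ->
    (forall m, qpoch c' q m != 0) ->
    Phi2 q a b b' (c * q ^+ n) c' =
    (fun m p =>
       \sum_(k < n.+1) qbinom q n k * c ^+ k * q ^+ (2 * 'C(k, 2)) *
         qpoch (c * q ^+ k) q (n - k) *
         subst_x (Phi2 q a b b' (c * q ^+ k) c') (q ^+ k) m p))).
Proof.
case/andP=> q_gt0 q_lt1; have q_neq0 : q != 0 by rewrite -normr_gt0.
split=> [c_neq0 nz_lower nz_c _ nz_qc | nz_raise _];
  apply: functional_extensionality => m; apply: functional_extensionality => p.
- rewrite /subst_x [LHS]Phi2_factor_c (Phi2_factor_c _ _ _ _ c).
  under eq_bigr do rewrite mulrCA.
  rewrite -mulr_sumr sum_lower_coef_ratio //.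
  by field; rewrite nz_qc nz_c nz_lower.
- rewrite Phi2_factor_c inv_qpoch_raise //; last by move=> k; apply: nz_raise.
  rewrite mulr_sumr; apply: eq_bigr => k _.
  by rewrite /subst_x (Phi2_factor_c _ _ _ _ (c * q ^+ k)); ring.
Qed.
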